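(* Let $(\mathbb{K},\partial)$ be a differential field whose field of constants $C$ is algebraically closed of characteristic zero, and let $L=\partial^n+u_{n-2}\partial^{n-2}+\dots+u_1\partial+u_0\in\mathbb{K}[\partial]$ be a differential operator of order $n$ in normal form. Let $\mathcal{G}=\{G_0=1,G_1,\ldots,G_{t-1}\}$ be a Goodearl basis of the centralizer $\mathcal{C}(L)$ as a $C[L]$-module, and let $\phi_L:C[\lambda,\mu_1,\ldots,\mu_{t-1}]\to\mathcal{C}(L)$ be the $C$-algebra homomorphism with $\phi_L(\lambda)=L$ and $\phi_L(\mu_i)=G_i$. Let $q\in C[\lambda,\mu_1,\ldots,\mu_{t-1}]$ be linear in $\mu_1,\ldots,\mu_{t-1}$, i.e. $q=q_0(\lambda)+q_1(\lambda)\mu_1+\dots+q_{t-1}(\lambda)\mu_{t-1}$ with $q_i\in C[\lambda]$. Then $q\in\mathrm{BC}(L):=\ker(\phi_L)$ if and only if $q=0$.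
   Context: $\mathbb{K}[\partial]$ is the ring of linear ordinary differential operators with coefficients in $\mathbb{K}$ (with $\partial a=a\partial+\partial(a)$). The centralizer of $L$ is $\mathcal{C}(L)=\{A\in\mathbb{K}[\partial]: LA=AL\}$, a commutative ring containing $C[L]$. A Goodearl basis of $\mathcal{C}(L)$ is a basis $\{G_0=1,G_1,\ldots,G_{t-1}\}$ of $\mathcal{C}(L)$ as a $C[L]$-module such that: each $G_k$ has minimal order among the elements $Q\in\mathcal{C}(L)$ with $\mathrm{ord}(Q)\equiv\mathrm{ord}(G_k)\pmod n$; and the classes $\mathrm{ord}(G_k)\bmod n$, $k=0,\ldots,t-1$, are pairwise distinct and form the set of all classes modulo $n$ of orders of elements of $\mathcal{C}(L)$ (a subgroup of $\mathbb{Z}/n\mathbb{Z}$ of cardinality $t$). $\mathrm{BC}(L)=\ker(\phi_L)$ is called the Burchnall–Chaundy ideal of $L$. *)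

From HB Require Import structures.
From mathcomp Require Import all_boot all_order all_algebra.
Set Implicit Arguments. Unset Strict Implicit. Unset Printing Implicit Defensive.
Import Order.TTheory GRing.Theory.
Local Open Scope ring_scope.

Section DiffOps.
Variable K : fieldType.
Variable D : K -> K.

Definition is_derivation : Prop :=
  (forall a b : K, D (a + b) = D a + D b) /\
  (forall a b : K, D (a * b) = D a * b + a * D b).

Definition is_const (a : K) : bool := D a == 0.
Definition const_poly (p : {poly K}) : Prop := forall i, is_const p`_i.

Definition consts_alg_closed : Prop :=
  forall p : {poly K}, const_poly p -> (1 < size p)%N ->
    exists2 x, is_const x & root p x.

(* Differential operators A = \sum_i a_i d^i are represented by their
   coefficient polynomial in {poly K} (coefficient i = coefficient of d^i);
   addition is that of {poly K}, multiplication is the twisted one below. *)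
(* d * B *)
Definition dleft (B : {poly K}) : {poly K} := B * 'X + map_poly D B.
Definition dmul (A B : {poly K}) : {poly K} :=
  \sum_(i < size A) A`_i *: iter i dleft B.
Definition dpow (A : {poly K}) (k : nat) : {poly K} := iter k (dmul A) 1.
Definition dord (A : {poly K}) : nat := (size A).-1.

Definition peval (p : {poly K}) (L : {poly K}) : {poly K} :=
  \sum_(i < size p) p`_i *: dpow L i.

Definition normal_form (n : nat) (L : {poly K}) : Prop :=
  size L = n.+1 /\ L`_n = 1 /\ L`_n.-1 = 0.

Definition in_centralizer (L A : {poly K}) : Prop := dmul L A = dmul A L.

(* image under phi_L of q = q_0(lambda) + \sum_{i>=1} q_i(lambda) mu_i,
   q_i in C[lambda]; since G_0 = 1 this is \sum_i q_i(L) G_i. *)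
Definition phi_lin (t : nat) (L : {poly K}) (G : 'I_t -> {poly K})
  (q : 'I_t -> {poly K}) : {poly K} :=
  \sum_(i < t) dmul (peval (q i) L) (G i).

Definition goodearl_basis (n : nat) (L : {poly K}) (t : nat)
  (G : 'I_t -> {poly K}) : Prop :=
      (exists h : (0 < t)%N, G (Ordinal h) = 1) /\
      (forall k, in_centralizer L (G k)) /\
      (forall A, in_centralizer L A ->
         exists p : 'I_t -> {poly K},
           (forall k, const_poly (p k)) /\ A = phi_lin L G p) /\
      (forall p : 'I_t -> {poly K}, (forall k, const_poly (p k)) ->
         phi_lin L G p = 0 -> forall k, p k = 0) /\
      (forall k Q, in_centralizer L Q -> Q != 0 ->
         dord Q = dord (G k) %[mod n] -> (dord (G k) <= dord Q)%N) /\
      (forall k l, dord (G k) = dord (G l) %[mod n] -> k = l) /\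
      (forall Q, in_centralizer L Q -> Q != 0 ->
         exists k, dord Q = dord (G k) %[mod n]).

End DiffOps.

From mathcomp Require Import all_boot all_order all_algebra.
Import GRing.Theory.
Local Open Scope ring_scope.

Section ZeroOperators.
Variables (K : fieldType) (D : K -> K).

Lemma dmul0 (B : {poly K}) : dmul D 0 B = 0.
Proof. by rewrite /dmul size_poly0 big_ord0. Qed.

Lemma peval0 (L : {poly K}) : peval D 0 L = 0.
Proof. by rewrite /peval size_poly0 big_ord0. Qed.

Lemma phi_lin0 (t : nat) (L : {poly K}) (G q : 'I_t -> {poly K}) :
  (forall i, q i = 0) -> phi_lin D L G q = 0.
Proof. by move=> q0; rewrite /phi_lin big1 // => i _; rewrite q0 peval0 dmul0. Qed.

End ZeroOperators.

Lemma goodearl_basis_free (K : fieldType) (D : K -> K) (n : nat)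
  (L : {poly K}) (t : nat) (G q : 'I_t -> {poly K}) :
  goodearl_basis D n L G -> (forall i, const_poly D (q i)) ->
  phi_lin D L G q = 0 -> forall i, q i = 0.
Proof. by case=> _ [_ [_ [free _]]]; apply: free. Qed.

Theorem lemma4p4 (K : fieldType) (D : K -> K) (n : nat) (L : {poly K})
  (t : nat) (G : 'I_t -> {poly K}) :
  is_derivation D ->
  consts_alg_closed D ->
  [pchar K] =i pred0 ->
  (0 < n)%N ->
  normal_form n L ->
  goodearl_basis D n L G ->
  forall q : 'I_t -> {poly K},
    (forall i, const_poly D (q i)) ->
    (phi_lin D L G q = 0 <-> (forall i, q i = 0)).
Proof.
move=> _ _ _ _ _ basisG q constq; split.
- exact: goodearl_basis_free basisG constq.
- exact: phi_lin0.
Qed.
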